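(* Let $n\geq 3$ be an odd integer. Then $n$ is composite or $n\equiv 1\pmod 4$ if and only if there exists an integer $d$ such that both $d$ and $-d$ are quadratic nonresidues modulo $n$.
   Context: An integer $d$ is a quadratic residue modulo $n$ if $d\not\equiv 0 \pmod n$ and $d\equiv x^2\pmod n$ for some integer $x$; it is a quadratic nonresidue modulo $n$ if $d\not\equiv x^2 \pmod n$ for every integer $x$. *)

From mathcomp Require Import all_boot all_order all_algebra.
Set Implicit Arguments. Unset Strict Implicit. Unset Printing Implicit Defensive.
Import Order.TTheory GRing.Theory Num.Theory.
Local Open Scope ring_scope.

Definition quad_nonresidue (d : int) (n : nat) : Prop :=
  forall x : int, (d != x ^+ 2 %[mod n%:Z])%Z.

Definition composite (n : nat) : Prop := (1 < n)%N /\ ~~ prime n.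

From mathcomp Require Import all_boot all_order all_algebra all_field.
From mathcomp Require Import zify ring.
Import GRing.Theory.
Local Open Scope ring_scope.

(* The core is the theory of squares in a finite field F: more than half of
   the elements of F are squares (card_squares), so if -1 is not a square then
   every element is a square or the opposite of one (square_or_neg_square).
   In odd characteristic a nonsquare exists, and -1 is not a square when
   #|F| = 3 (mod 4) (Fermat); in 'F_p with p = 1 (mod 4), Wilson's theorem
   gives (((p-1)/2)!)^2 = -1.

   Residues modulo a prime p are read in 'F_p (nonresidue_Fp), and a
   nonresidue modulo a divisor of n is a nonresidue modulo n.  A pair (d, -d)
   of nonresidues then exists
   - modulo p^2 for a prime p, taking d = p;
   - modulo p * q for distinct odd primes, by the Chinese remainder theorem;
   - modulo a prime p = 1 (mod 4), taking a nonsquare d, as -1 is a square;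
   but not modulo a prime p = 3 (mod 4).  An odd composite number is divisible
   by a prime square or by two distinct odd primes, and the theorem follows by
   cases on the primality of n. *)

Section FiniteFieldSquares.
Variable F : finFieldType.

Definition squares : {set F} := [set x ^+ 2 | x : F].

(* Each square s has roots +-root s, so F is covered by two images of squares
   which share the element 0: #|F| <= 2 #|squares| - 1. *)
Lemma card_squares : (#|F| < 2 * #|squares|)%N.
Proof.
pose root (s : F) := odflt 0 [pick x | x ^+ 2 == s].
have rootK s : s \in squares -> root s ^+ 2 = s.
  case/imsetP=> x _ ->; rewrite /root.
  by case: pickP => [y /eqP // | /(_ x)]; rewrite eqxx.
have S0 : 0 \in squares by apply/imsetP; exists 0; rewrite ?expr0n.
have root0 : root 0 = 0 by apply/eqP; rewrite -[_ == 0](expf_eq0 _ 2) rootK.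
pose A : {set F} := [set root s | s in squares].
pose B : {set F} := [set - root s | s in squares].
have coverAB : A :|: B = [set: F].
  apply/eqP; rewrite eqEsubset subsetT; apply/subsetP=> x _.
  have Sx : x ^+ 2 \in squares by apply/imsetP; exists x.
  have /eqP := rootK _ Sx; rewrite eq_sym eqf_sqr => /orP[/eqP-> | /eqP->].
    by rewrite inE; apply/orP; left; apply/imsetP; exists (x ^+ 2).
  by rewrite inE; apply/orP; right; apply/imsetP; exists (x ^+ 2).
have zeroAB : 0 \in A :&: B.
  by rewrite inE; apply/andP; split; apply/imsetP; exists 0; rewrite ?root0 ?oppr0.
have cardA : (#|A| <= #|squares|)%N := leq_imset_card _ _.
have cardB : (#|B| <= #|squares|)%N := leq_imset_card _ _.
have meetAB : (0 < #|A :&: B|)%N by apply/card_gt0P; exists 0.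
have cardAB : (#|F| + #|A :&: B| = #|A| + #|B|)%N by rewrite -cardsT -coverAB cardsUI.
lia.
Qed.

(* If -1 is not a square, squares and their opposites meet only in 0, so by
   card_squares they exhaust F. *)
Lemma square_or_neg_square :
  (forall i : F, i ^+ 2 != -1) ->
  forall a : F, (exists x, a = x ^+ 2) \/ (exists x, a = - x ^+ 2).
Proof.
move=> noi a; pose N : {set F} := [set - s | s in squares].
have cardN : #|N| = #|squares| by rewrite card_imset //; exact: oppr_inj.
have meet0 : (#|squares :&: N| <= 1)%N.
  rewrite -(cards1 (0 : F)); apply/subset_leq_card/subsetP=> b.
  case/setIP=> /imsetP[x _ ->] /imsetP[_ /imsetP[y _ ->] /eqP]; rewrite inE.
  have [-> | y0] := eqVneq y 0; first by rewrite expr0n oppr0 => /eqP->.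
  move=> /eqP E; have := noi (x / y).
  by rewrite expr_div_n E mulNr divff ?eqxx ?expf_neq0.
have cover : squares :|: N = [set: F].
  have cardSN : (#|squares :|: N| + #|squares :&: N| = 2 * #|squares|)%N.
    by rewrite cardsUI cardN addnn mul2n.
  apply/eqP; rewrite eqEcard subsetT.
  have := card_squares; rewrite -cardsT; lia.
have : a \in squares :|: N by rewrite cover inE.
case/setUP=> [/imsetP[x _ ->] | /imsetP[_ /imsetP[x _ ->] ->]].
  by left; exists x.
by right; exists x.
Qed.

(* When -1 = i^2, the opposite of a nonsquare is a nonsquare: -r = y^2 would
   give r = (i y)^2. *)
Lemma opp_nonsquare (r : F) :
  (exists i : F, i ^+ 2 = -1) -> r \notin squares -> - r \notin squares.
Proof.
case=> i i2; apply: contra => /imsetP[y _ ry]; apply/imsetP; exists (i * y) => //.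
by rewrite exprMn i2 -ry; ring.
Qed.

Hypothesis two_neq0 : (2%:R : F) != 0.

Lemma eq_opp_self (x : F) : (x == - x) = (x == 0).
Proof.
apply/idP/eqP=> [/eqP E | ->]; last by rewrite oppr0.
have /eqP : x *+ 2 = 0 by rewrite mulr2n {1}E addNr.
by rewrite -mulr_natr mulf_eq0 (negPf two_neq0) orbF => /eqP.
Qed.

(* Squaring cannot be onto, since it is not injective: 1^2 = (-1)^2. *)
Lemma nonsquare_exists : exists r : F, r \notin squares.
Proof.
case: (pickP (fun r : F => r \notin squares)) => [r nsq_r | all_sq]; first by exists r.
have /imset_injP sq_inj : #|squares| == #|F|.
  rewrite eqn_leq max_card -cardsT subset_leq_card //.
  by apply/subsetP=> r _; move/negbFE: (all_sq r).
have /eqP := sq_inj 1 (-1) isT isT (esym (sqrrN 1)).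
by rewrite eq_opp_self oner_eq0.
Qed.

(* Fermat: i^#|F| = i, and for #|F| = 4k + 3 and i^2 = -1 this reads -i = i. *)
Lemma neg1_nonsquare : (#|F| %% 4 = 3)%N -> forall i : F, i ^+ 2 != -1.
Proof.
move=> F3 i; apply/eqP=> i2.
have : i ^+ (2 * (2 * (#|F| %/ 4) + 1) + 1) = i.
  by rewrite -[RHS](expf_card i); congr (_ ^+ _); lia.
rewrite exprD exprM i2 exprD exprM sqrrN !expr1n mul1r !expr1 mulN1r.
move/eqP; rewrite eq_sym eq_opp_self => /eqP i0.
by move: i2; rewrite i0 expr0n /= => /eqP; rewrite eq_sym oppr_eq0 oner_eq0.
Qed.

End FiniteFieldSquares.

Arguments nonsquare_exists {F}.
Arguments neg1_nonsquare {F}.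
Arguments opp_nonsquare {F r}.
Arguments square_or_neg_square {F}.

Section PrimeField.
Variable p : nat.
Hypothesis p_prime : prime p.
Local Notation F := 'F_p.

Lemma Fp_two_neq0 : p != 2%N -> (2%:R : F) != 0.
Proof.
move=> p_neq2; rewrite -(dvdn_pcharf (pchar_Fp p_prime)).
apply: contra p_neq2 => /(dvdn_leq (isT : (0 < 2)%N)) p_le2.
by have := prime_gt1 p_prime; rewrite eqn_leq p_le2 /=; lia.
Qed.

(* The top m factors of (p-1)! are -1, ..., -m modulo p. *)
Lemma Fp_prod_top (m : nat) : (m < p)%N ->
  \prod_(p - m <= k < p) (k%:R : F) = (-1) ^+ m * (m`!)%:R.
Proof.
elim: m => [|m IH] m_lt; first by rewrite subn0 big_geq // mulr1.
rewrite big_ltn; last by lia.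
rewrite (_ : (p - m.+1).+1 = p - m)%N; last by lia.
rewrite IH; last by lia.
have -> : ((p - m.+1)%:R : F) = - (m.+1)%:R.
  have p_split : (p - m.+1 + m.+1 = p)%N by lia.
  by apply/eqP; rewrite -subr_eq0 opprK -natrD p_split pchar_Fp_0.
by rewrite factS natrM exprS; ring.
Qed.

(* For p = 4k + 1, h = (p-1)/2 is even, so Wilson's theorem and the splitting
   (p-1)! = h! * (-1)^h h! give (h!)^2 = -1. *)
Lemma Fp_sqrt_neg1 : (p %% 4 = 1)%N -> exists i : F, i ^+ 2 = -1.
Proof.
move=> p1; set h := (p.-1./2)%N; exists (h`!)%:R.
have wilson : ((p.-1)`!)%:R = -1 :> F.
  have : (p %| (p.-1)`!.+1)%N by rewrite -Wilson ?prime_gt1.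
  by rewrite (dvdn_pcharf (pchar_Fp p_prime)) -natr1 addr_eq0 => /eqP.
have h_even : (-1) ^+ h = 1 :> F.
  by rewrite (_ : h = 2 * (p %/ 4))%N ?exprM ?sqrrN ?expr1n //; rewrite /h; lia.
rewrite -wilson [in RHS]fact_prod [in RHS]natr_prod (_ : p.-1.+1 = p)%N; last by lia.
have half_p : (p - h = h.+1)%N by rewrite /h; lia.
rewrite (big_cat_nat (n := h.+1)) /=; [|lia|lia].
rewrite -[in X in _ * X]half_p Fp_prod_top; last by lia.
by rewrite h_even mul1r fact_prod natr_prod expr2.
Qed.

End PrimeField.

Arguments Fp_two_neq0 {p}.
Arguments Fp_sqrt_neg1 {p}.

Lemma eqz_mod_Fp p (a b : int) : prime p ->
  (a == b %[mod p])%Z = (a%:~R == b%:~R :> 'F_p).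
Proof.
move=> p_prime.
by rewrite eqz_mod_dvd (dvdz_pcharf (pchar_Fp p_prime)) rmorphB /= subr_eq0.
Qed.

Lemma nonresidue_Fp {p : nat} (d : int) : prime p ->
  quad_nonresidue d p <-> (d%:~R : 'F_p) \notin squares 'F_p.
Proof.
move=> p_prime; split=> [nres | nsq x].
  apply/imsetP=> -[y _ dy]; have := nres (val y)%:Z.
  by rewrite eqz_mod_Fp // rmorphXn /= dy -[X in X ^+ 2]natr_Zp eqxx.
rewrite eqz_mod_Fp // rmorphXn /=; apply: contra nsq => /eqP->.
by apply/imsetP; exists x%:~R.
Qed.

Lemma Fp_intE p (r : 'F_p) : ((val r)%:Z)%:~R = r.
Proof. exact: natr_Zp. Qed.

Lemma nonresidue_dvd {k n : nat} {d : int} :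
  (k %| n)%N -> quad_nonresidue d k -> quad_nonresidue d n.
Proof.
move=> kn nres x; apply: contra (nres x); rewrite !eqz_mod_dvd.
by apply: dvdz_trans; rewrite dvdzE.
Qed.

Lemma nonresidue_congr {n : nat} {d d' : int} :
  (d = d' %[mod n])%Z -> quad_nonresidue d' n -> quad_nonresidue d n.
Proof. by move=> dd' nres x; rewrite dd'; apply: nres. Qed.

(* If p divides s exactly once, s = x^2 (mod p^2) would force p | x, hence
   p^2 | x^2 and p^2 | s. *)
Lemma nonresidue_prime_sq {p : nat} {s : int} : prime p ->
  (p %| `|s|)%N -> ~~ (p ^ 2 %| `|s|)%N -> quad_nonresidue s (p ^ 2).
Proof.
move=> p_prime p_s p2_s x; rewrite eqz_mod_dvd; apply: contra p2_s => p2_sx.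
have p_sx : (p%:Z %| s - x ^+ 2)%Z.
  by apply: dvdz_trans p2_sx; rewrite dvdzE /= -{1}(expn1 p) dvdn_exp2l.
have p_x2 : (p%:Z %| x ^+ 2)%Z.
  by rewrite -[x ^+ 2](subKr s) rpredB // dvdzE.
have p2_x2 : ((p ^ 2)%N%:Z %| x ^+ 2)%Z.
  move: p_x2; rewrite !dvdzE abszX /= Euclid_dvdX // andbT; exact: dvdn_exp2r.
have : ((p ^ 2)%N%:Z %| s)%Z by rewrite -[s](subrK (x ^+ 2)) rpredD.
by rewrite dvdzE.
Qed.

(* A composite number is divisible by the square of a prime or by two
   distinct primes (look at its least prime factor p and at n / p). *)
Lemma composite_cases {n : nat} : composite n ->
  (exists p, prime p /\ (p ^ 2 %| n)%N) \/
  (exists p q, [/\ prime p, prime q, p != q, (p %| n)%N & (q %| n)%N]).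
Proof.
case=> n_gt1 n_not_prime; set p := pdiv n; set m := (n %/ p)%N.
have p_prime : prime p := pdiv_prime n_gt1.
have n_pm : n = (m * p)%N by rewrite /m divnK ?pdiv_dvd.
have [p_m | p_not_m] := boolP (p %| m)%N.
  by left; exists p; split; rewrite // n_pm -mulnn dvdn_mul.
have m_gt1 : (1 < m)%N.
  case: m n_pm p_not_m => [|[|m]] // n_pm; first by move: n_gt1; rewrite n_pm.
  by move: n_not_prime; rewrite n_pm mul1n p_prime.
right; exists p, (pdiv m); split; rewrite ?pdiv_prime ?pdiv_dvd //.
  by apply: contraNneq p_not_m => ->; rewrite pdiv_dvd.
by rewrite n_pm dvdn_mulr ?pdiv_dvd.
Qed.

Definition has_opp_nonresidues (n : nat) : Prop :=
  exists d : int, quad_nonresidue d n /\ quad_nonresidue (- d) n.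

Lemma opp_nonresidues_dvd {k n : nat} :
  (k %| n)%N -> has_opp_nonresidues k -> has_opp_nonresidues n.
Proof.
by move=> kn [d [nres_d nres_nd]]; exists d; split; apply: nonresidue_dvd kn _.
Qed.

(* Modulo p^2, d = p works: p divides p exactly once. *)
Lemma opp_nonresidues_prime_sq {p : nat} : prime p ->
  has_opp_nonresidues (p ^ 2).
Proof.
move=> p_prime; have p_gt1 := prime_gt1 p_prime.
have p2_not_p : ~~ (p ^ 2 %| p)%N.
  by apply/negP => /(dvdn_leq (prime_gt0 p_prime)); nia.
by exists p%:Z; split; apply: nonresidue_prime_sq; rewrite ?abszN.
Qed.

(* d = r (mod p) and d = -s (mod q) for nonresidues r mod p and s mod q. *)
Lemma opp_nonresidues_two_primes {p q : nat} : prime p -> prime q ->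
  p != 2%N -> q != 2%N -> p != q -> has_opp_nonresidues (p * q).
Proof.
move=> p_prime q_prime p_odd q_odd p_neq_q.
have pq_coprime : coprimez p q by rewrite coprimezE prime_coprime // dvdn_prime2.
have [r nsq_r] := nonsquare_exists (Fp_two_neq0 p_prime p_odd).
have [s nsq_s] := nonsquare_exists (Fp_two_neq0 q_prime q_odd).
pose d := zchinese p q (val r)%:Z (- (val s)%:Z).
have d_p : (d = (val r)%:Z %[mod p])%Z by apply: zchinese_modl.
have d_q : (- d = (val s)%:Z %[mod q])%Z.
  by rewrite -modzNm zchinese_modr // modzNm opprK.
exists d; split.
  apply: (nonresidue_dvd (dvdn_mulr _ (dvdnn p))); apply: nonresidue_congr d_p _.
  by apply/(nonresidue_Fp _ p_prime); rewrite Fp_intE.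
apply: (nonresidue_dvd (dvdn_mull _ (dvdnn q))); apply: nonresidue_congr d_q _.
by apply/(nonresidue_Fp _ q_prime); rewrite Fp_intE.
Qed.

Lemma opp_nonresidues_composite {n : nat} : odd n -> composite n ->
  has_opp_nonresidues n.
Proof.
move=> n_odd n_comp; have odd_div p : (p %| n)%N -> p != 2%N.
  by apply: contraTneq => ->; rewrite dvdn2 n_odd.
case: (composite_cases n_comp) =>
  [[p [p_prime p2_n]] | [p [q [p_prime q_prime pq p_n q_n]]]].
  exact: opp_nonresidues_dvd p2_n (opp_nonresidues_prime_sq p_prime).
apply: opp_nonresidues_dvd (opp_nonresidues_two_primes p_prime q_prime (odd_div _ p_n)
  (odd_div _ q_n) pq).
by rewrite Gauss_dvd ?p_n ?q_n // prime_coprime // dvdn_prime2.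
Qed.

(* A nonsquare r of 'F_p gives the pair (r, -r) since -1 is a square. *)
Lemma opp_nonresidues_prime_1mod4 {p : nat} : prime p -> (p %% 4 = 1)%N ->
  has_opp_nonresidues p.
Proof.
move=> p_prime p1.
have p_odd : p != 2%N by apply: contra_eqN p1 => /eqP ->.
have [r nsq_r] := nonsquare_exists (Fp_two_neq0 p_prime p_odd).
have nsq_nr := opp_nonsquare (Fp_sqrt_neg1 p_prime p1) nsq_r.
exists (val r)%:Z; split; apply/(nonresidue_Fp _ p_prime);
  by rewrite ?rmorphN /= Fp_intE.
Qed.

(* Modulo p = 3 (mod 4) every d is a square or minus a square. *)
Lemma no_opp_nonresidues_prime_3mod4 {p : nat} : prime p -> (p %% 4 = 3)%N ->
  ~ has_opp_nonresidues p.
Proof.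
move=> p_prime p3 [d [/(nonresidue_Fp _ p_prime) nsq_d]].
move=> /(nonresidue_Fp _ p_prime) nsq_nd.
have card_p : (#|'F_p| %% 4 = 3)%N by rewrite card_Fp.
have p_odd : p != 2%N by apply: contra_eqN p3 => /eqP ->.
have := square_or_neg_square (neg1_nonsquare (Fp_two_neq0 p_prime p_odd) card_p) d%:~R.
case=> -[x dx]; [move: nsq_d | move: nsq_nd]; rewrite ?rmorphN /= dx ?opprK.
  by case/imsetP; exists x.
by case/imsetP; exists x.
Qed.

Theorem mainTheorem3 (n : nat) (hn : (3 <= n)%N) (hodd : odd n) :
  (composite n \/ n = 1 %[mod 4]) <->
  exists d : int, quad_nonresidue d n /\ quad_nonresidue (- d) n.
Proof.
have mod4_odd : (n %% 4 = 1 \/ n %% 4 = 3)%N.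
  have : (n %% 2 = 1)%N by rewrite modn2 hodd.
  lia.
have [n_prime | n_not_prime] := boolP (prime n); last first.
  have n_comp : composite n by split; first lia.
  by split=> _; [exact: opp_nonresidues_composite | left].
split=> [[[_ /negP] // | n1] | pair].
  exact: opp_nonresidues_prime_1mod4.
right; case: mod4_odd => // n3.
by case: (no_opp_nonresidues_prime_3mod4 n_prime n3 pair).
Qed.
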